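(* Let $u\in R^{\times}$, $a\in R$. For every right $H_N^q$-comodule algebra map $f:T\to\mathcal{B}_{(u,a)}$ there exist unique $\lambda,\mu,\xi\in R$ such that $f(E)=\lambda$, $f(G)=\mu v_g$ and $f(X)=\lambda v_x+\xi v_g$.
   Context: $R$ is a commutative unital ring, $N\ge2$, and $q\in R$ a root of the $N$-th cyclotomic polynomial over $\mathbb{Z}$. $H_N^q$ is the Taft Hopf algebra over $R$: generated by $g,x$ with $g^N=1$, $x^N=0$, $xg=qgx$, $\Delta(g)=g\otimes g$, $\Delta(x)=1\otimes x+x\otimes g$, $\varepsilon(g)=1$, $\varepsilon(x)=0$; it is free over $R$ with basis $\{g^mx^n:0\le m,n<N\}$. For $u\in R^{\times}$, $a\in R$, $\mathcal{B}_{(u,a)}$ is the $R$-algebra generated by $v_g,v_x$ with $v_g^N=u$, $v_x^N=a$, $v_xv_g=qv_gv_x$, free over $R$ with basis $\{v_g^mv_x^n:0\le m,n<N\}$, and a right $H_N^q$-comodule algebra via $\rho(v_g)=v_g\otimes g$, $\rho(v_x)=1\otimes x+v_x\otimes g$. For each $i\ge1$ let $Z_i^H=\{Z_i^h:h\in H_N^q\}$ be a copy of the $R$-module $H_N^q$ and $T=T(\bigoplus_{i\ge1}Z_i^H)$ the tensor algebra, a right $H_N^q$-comodule algebra via $\delta(Z_i^h)=\sum Z_i^{h_1}\otimes h_2$. Set $E=Z_1^1$, $G=Z_1^g$, $X=Z_1^x$, so $\delta(E)=E\otimes1$, $\delta(G)=G\otimes g$, $\delta(X)=E\otimes x+X\otimes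 g$. *)

From HB Require Import structures.
From mathcomp Require Import all_boot all_algebra cyclotomic.
From mathcomp Require Import finmap monalg.

Set Implicit Arguments.
Unset Strict Implicit.
Unset Printing Implicit Defensive.

Import GRing.Theory.
Local Open Scope ring_scope.

(* The Taft algebra H = H_N^q and B = B_(u,a) are free R-modules with basis *)
(* indexed by K N = 'I_N * 'I_N : the key (m, n) stands for g^m x^n in H and *)
(* for v_g^m v_x^n in B.  Elements are coefficient vectors {ffun K N -> R^o}. *)
(* For an R-module A, A (x) H is represented by {ffun K N -> A}: the        *)
(* function F stands for  sum_k F k (x) (g^m x^n)_k.                        *)

Section Taft.

Variables (R : comNzRingType) (N : nat) (q u a : R).

Definition Key := ('I_N * 'I_N)%type.

Definition Vec := {ffun Key -> R^o}.

(* basis vector g^m x^n (resp. v_g^m v_x^n); zero if m or n is >= N *)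
Definition bas (m n : nat) : Vec :=
  [ffun k : Key => if ((k.1 : nat) == m) && ((k.2 : nat) == n) then 1 else 0].

(* multiplication of basis elements of H_N^q :
   g^m x^n * g^m' x^n' = q^(n m') g^(m+m' mod N) x^(n+n')  (0 if n+n' >= N) *)
Definition Hprod (k l : Key) : Vec :=
  if ((k.2 : nat) + l.2 < N)%N
  then (q ^+ (k.2 * l.1)) *: bas ((k.1 + l.1) %% N) (k.2 + l.2)
  else 0.

(* multiplication of basis elements of B_(u,a) :
   v_g^m v_x^n * v_g^m' v_x^n' = q^(n m') v_g^(m+m') v_x^(n+n'), reduced by
   v_g^N = u and v_x^N = a *)
Definition Bprod (k l : Key) : Vec :=
  (q ^+ (k.2 * l.1) * (if ((k.1 : nat) + l.1 < N)%N then 1 else u)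
                    * (if ((k.2 : nat) + l.2 < N)%N then 1 else a))
    *: bas ((k.1 + l.1) %% N) ((k.2 + l.2) %% N).

Definition smul (c : Key -> Key -> Vec) (x y : Vec) : Vec :=
  \sum_(k : Key) \sum_(l : Key) (x k * y l) *: c k l.

Definition Hmul := smul Hprod.
Definition Bmul := smul Bprod.

Definition oneV : Vec := bas 0 0.
Definition hg : Vec := bas 1 0.
Definition hx : Vec := bas 0 1.
Definition vg : Vec := bas 1 0.
Definition vx : Vec := bas 0 1.

Section TensH.
Variables (A : lmodType R) (mulA : A -> A -> A) (oneA : A).

Definition tens (b : A) (h : Vec) : {ffun Key -> A} := [ffun j => h j *: b].

Definition tmul (F genG : {ffun Key -> A}) : {ffun Key -> A} :=
  [ffun j => \sum_(k : Key) \sum_(l : Key) Hprod k l j *: mulA (F k) (genG l)].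

Definition tone : {ffun Key -> A} := tens oneA oneV.

Definition tpow (F : {ffun Key -> A}) (n : nat) := iter n (tmul F) tone.
End TensH.

Definition Dg : {ffun Key -> Vec} := tens hg hg.
Definition Dx : {ffun Key -> Vec} := tens oneV hx + tens hx hg.
Definition Delta_bas (k : Key) : {ffun Key -> Vec} :=
  tmul Hmul (tpow Hmul oneV Dg k.1) (tpow Hmul oneV Dx k.2).
Definition Delta (h : Vec) : {ffun Key -> Vec} := \sum_(k : Key) h k *: Delta_bas k.

Definition rho_g : {ffun Key -> Vec} := tens vg hg.
Definition rho_x : {ffun Key -> Vec} := tens oneV hx + tens vx hg.
Definition rho_bas (k : Key) : {ffun Key -> Vec} :=
  tmul Bmul (tpow Bmul oneV rho_g k.1) (tpow Bmul oneV rho_x k.2).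
Definition rho (b : Vec) : {ffun Key -> Vec} := \sum_(k : Key) b k *: rho_bas k.

(* ---- the tensor algebra T = T(oplus_{i>=1} Z_i^H) ----
   The module oplus_{i>=1} Z_i^H is free with basis the symbols
   Z_i^{g^m x^n}; we encode Z_{i+1}^{g^m x^n} by the letter (i, (m,n)) with
   i : nat.  Its tensor algebra is the free associative R-algebra on these
   letters, i.e. the monoid algebra of the free monoid of words. *)
Definition Letter := (nat * Key)%type.
Definition TA := {malg R[{fmonom Letter}]}.

Definition Zgen (i : nat) (h : Vec) : TA := \sum_(k : Key) h k *: << fmu (i, k) >>.

Definition genE : TA := Zgen 0 oneV.
Definition genG : TA := Zgen 0 hg.
Definition genX : TA := Zgen 0 hx.

Definition delta_letter (l : Letter) : {ffun Key -> TA} :=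
  [ffun j => Zgen l.1 (Delta (bas l.2.1 l.2.2) j)].
Definition delta_word (w : {fmonom Letter}) : {ffun Key -> TA} :=
  foldr (fun l acc => tmul (@GRing.mul TA) (delta_letter l) acc)
        (tone (1 : TA)) (w : seq Letter).
Definition delta (t : TA) : {ffun Key -> TA} :=
  \sum_(w <- msupp t) t@_w *: delta_word w.

Definition is_comodule_algebra_map (f : TA -> Vec) : Prop :=
  [/\ (forall s t : TA, f (s + t) = f s + f t),
      (forall (c : R) (t : TA), f (c *: t) = c *: f t),
      f 1 = oneV,
      (forall s t : TA, f (s * t) = Bmul (f s) (f t)) &
      (forall t : TA, rho (f t) = [ffun j => f (delta t j)])].

End Taft.

From HB Require Import structures.
From mathcomp Require Import all_boot all_algebra cyclotomic.
From mathcomp Require Import finmap monalg zify.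

(* The coefficient of v_g^m (x) g^m x^n in rho(b) is the coefficient of
   v_g^m v_x^n in b.  Indeed rho(v_g^m' v_x^n') = (v_g (x) g)^m' (1 (x) x + v_x (x) g)^n',
   and the only summand free of v_x is v_g^m' (x) g^m' x^n' (the v_x-degree stays below
   N, so v_x^N = a never intervenes).  Hence a comodule map f is read off from
   (f (x) id) o delta, and delta(E) = E (x) 1, delta(G) = G (x) g,
   delta(X) = E (x) x + X (x) g force f(E) = lam, f(G) = mu v_g and
   f(X) = lam v_x + xi v_g; uniqueness is a comparison of coordinates. *)

Set Implicit Arguments.
Unset Strict Implicit.
Unset Printing Implicit Defensive.

Import GRing.Theory.
Local Open Scope ring_scope.

Lemma ffunZE (R : nzRingType) (W : lmodType R) (I : finType) (c : R) (f : {ffun I -> W}) i :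
  (c *: f) i = c *: f i.
Proof. by rewrite ffunE. Qed.

Section Basis.
Variables (R : comNzRingType) (N : nat).
Local Notation K := (Key N).
Local Notation V := (Vec R N).

Lemma scaler_regE (x y : R) : x *: (y : R^o) = x * y.
Proof. by []. Qed.

Definition bvec (k : K) : V := bas R N k.1 k.2.

Lemma bvecE (k j : K) : bvec k j = (j == k)%:R.
Proof.
by rewrite ffunE; case: j k => [j1 j2] [k1 k2]; rewrite xpair_eqE; case: (_ && _).
Qed.

Lemma vec_expansion (x : V) : \sum_k x k *: bvec k = x.
Proof.
apply/ffunP => j; rewrite sum_ffunE (big_only1 j) // => [|k kj _].
  by rewrite ffunE bvecE eqxx scaler_regE mulr1.
by rewrite ffunE bvecE eq_sym (negbTE kj) scaler_regE mulr0.
Qed.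

Section BilinearExtension.
Variable c : K -> K -> V.

Lemma smul_bvecl (k : K) (y : V) : smul c (bvec k) y = \sum_l y l *: c k l.
Proof.
rewrite /smul (big_only1 k) // => [|k' k'k _].
  by apply: eq_bigr => l _; rewrite bvecE eqxx mul1r.
by apply: big1 => l _; rewrite bvecE (negbTE k'k) mul0r scale0r.
Qed.

Lemma smul_bvecr (x : V) (l : K) : smul c x (bvec l) = \sum_k x k *: c k l.
Proof.
apply: eq_bigr => k _; rewrite (big_only1 l) // => [|l' l'l _].
  by rewrite bvecE eqxx mulr1.
by rewrite bvecE (negbTE l'l) mulr0 scale0r.
Qed.

Lemma smul_bvec (k l : K) : smul c (bvec k) (bvec l) = c k l.
Proof.
rewrite smul_bvecl (big_only1 l) // => [|l' l'l _]; first by rewrite bvecE eqxx scale1r.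
by rewrite bvecE (negbTE l'l) scale0r.
Qed.

Lemma smulZl s (x y : V) : smul c (s *: x) y = s *: smul c x y.
Proof.
rewrite /smul scaler_sumr; apply: eq_bigr => k _; rewrite scaler_sumr.
by apply: eq_bigr => l _; rewrite ffunE scalerA mulrA.
Qed.

Lemma smulZr s (x y : V) : smul c x (s *: y) = s *: smul c x y.
Proof.
rewrite /smul scaler_sumr; apply: eq_bigr => k _; rewrite scaler_sumr.
by apply: eq_bigr => l _; rewrite ffunE scalerA mulrCA.
Qed.

Lemma smulDl (x1 x2 y : V) : smul c (x1 + x2) y = smul c x1 y + smul c x2 y.
Proof.
rewrite /smul -big_split; apply: eq_bigr => k _; rewrite -big_split.
by apply: eq_bigr => l _; rewrite ffunE mulrDl scalerDl.
Qed.

End BilinearExtension.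

Section Products.
Variables q u a : R.

Lemma HmulZl c (x y : V) : Hmul q (c *: x) y = c *: Hmul q x y.
Proof. exact: smulZl. Qed.

Lemma HmulZr c (x y : V) : Hmul q x (c *: y) = c *: Hmul q x y.
Proof. exact: smulZr. Qed.

Lemma BmulZl c (x y : V) : Bmul q u a (c *: x) y = c *: Bmul q u a x y.
Proof. exact: smulZl. Qed.

Lemma BmulZr c (x y : V) : Bmul q u a x (c *: y) = c *: Bmul q u a x y.
Proof. exact: smulZr. Qed.

Lemma BmulDl (x1 x2 y : V) : Bmul q u a (x1 + x2) y = Bmul q u a x1 y + Bmul q u a x2 y.
Proof. exact: smulDl. Qed.

End Products.

Lemma tensE (A : lmodType R) (b : A) (h : V) j : tens b h j = h j *: b.
Proof. by rewrite ffunE. Qed.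

Section MapTensor.
Variables (A B : lmodType R) (phi : A -> B).

Lemma map_tens (b : A) (h : V) :
    (forall c x, phi (c *: x) = c *: phi x) ->
  [ffun j => phi (tens b h j)] = tens (phi b) h.
Proof. by move=> phiZ; apply/ffunP => j; rewrite !ffunE phiZ. Qed.

Lemma map_tensD (x y : A) (h h' : V) :
    (forall x y, phi (x + y) = phi x + phi y) -> (forall c x, phi (c *: x) = c *: phi x) ->
  [ffun j => phi ((tens x h + tens y h') j)] = tens (phi x) h + tens (phi y) h'.
Proof. by move=> phiD phiZ; apply/ffunP => j; rewrite !ffunE phiD !phiZ. Qed.

End MapTensor.

Section TensorProduct.
Variables (q : R) (A : lmodType R) (mulA : A -> A -> A).
Hypothesis mulAZl : forall c x y, mulA (c *: x) y = c *: mulA x y.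
Hypothesis mulADl : forall x1 x2 y, mulA (x1 + x2) y = mulA x1 y + mulA x2 y.

Lemma tmul_tensl (x : A) (k : K) (G : {ffun K -> A}) (j : K) :
  tmul q mulA (tens x (bvec k)) G j = \sum_l Hprod q k l j *: mulA x (G l).
Proof.
rewrite ffunE (big_only1 k) // => [|k' k'k _].
  by apply: eq_bigr => l _; rewrite ffunE mulAZl bvecE eqxx scale1r.
by apply: big1 => l _; rewrite ffunE mulAZl bvecE (negbTE k'k) scale0r scaler0.
Qed.

Lemma tmul_tensr (y : A) (l : K) (F : {ffun K -> A}) (j : K) :
    (forall c x, mulA x (c *: y) = c *: mulA x y) ->
  tmul q mulA F (tens y (bvec l)) j = \sum_k Hprod q k l j *: mulA (F k) y.
Proof.
move=> mulAZr; rewrite ffunE; apply: eq_bigr => k _.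
rewrite (big_only1 l) // => [|l' l'l _]; first by rewrite ffunE mulAZr bvecE eqxx scale1r.
by rewrite ffunE mulAZr bvecE (negbTE l'l) scale0r scaler0.
Qed.

Lemma tmulDl (F1 F2 G : {ffun K -> A}) :
  tmul q mulA (F1 + F2) G = tmul q mulA F1 G + tmul q mulA F2 G.
Proof.
apply/ffunP => j; rewrite !ffunE -big_split; apply: eq_bigr => k _.
by rewrite -big_split; apply: eq_bigr => l _; rewrite ffunE mulADl scalerDr.
Qed.

Lemma tmul_tens (x y : A) (h h' : V) :
    (forall c x', mulA x' (c *: y) = c *: mulA x' y) ->
  tmul q mulA (tens x h) (tens y h') = tens (mulA x y) (Hmul q h h').
Proof.
move=> mulAZr; apply/ffunP => j; rewrite !ffunE sum_ffunE scaler_suml.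
apply: eq_bigr => k _; rewrite sum_ffunE scaler_suml; apply: eq_bigr => l _.
by rewrite !ffunE mulAZl mulAZr !scalerA scaler_regE mulrC.
Qed.

End TensorProduct.
End Basis.

Arguments bvec {R N} k.
Arguments bvecE {R N} k j.

Section Unit.
Variables (R : comNzRingType) (n : nat) (q u a : R).
Local Notation N := n.+1.
Local Notation K := (Key N).
Local Notation V := (Vec R N).

Definition unit_key : K := (ord0, ord0).

Lemma Hprod1l (l : K) : Hprod q unit_key l = bvec l.
Proof. by rewrite /Hprod /= !add0n ltn_ord mul0n expr0 scale1r modn_small. Qed.

Lemma Hprod1r (k : K) : Hprod q k unit_key = bvec k.
Proof. by rewrite /Hprod /= !addn0 ltn_ord muln0 expr0 scale1r modn_small. Qed.

Lemma Bprod1l (l : K) : Bprod q u a unit_key l = bvec l.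
Proof. by rewrite /Bprod /= !add0n !ltn_ord mul0n expr0 !mulr1 scale1r !modn_small. Qed.

Lemma Bprod1r (k : K) : Bprod q u a k unit_key = bvec k.
Proof. by rewrite /Bprod /= !addn0 !ltn_ord muln0 expr0 !mulr1 scale1r !modn_small. Qed.

Lemma Hmul1l : left_id (oneV R N) (Hmul q).
Proof.
move=> y; rewrite /Hmul (smul_bvecl _ unit_key).
by under eq_bigr do rewrite Hprod1l; apply: vec_expansion.
Qed.

Lemma Hmul1r : right_id (oneV R N) (Hmul q).
Proof.
move=> x; rewrite /Hmul (smul_bvecr _ _ unit_key).
by under eq_bigr do rewrite Hprod1r; apply: vec_expansion.
Qed.

Lemma Bmul1l : left_id (oneV R N) (Bmul q u a).
Proof.
move=> y; rewrite /Bmul (smul_bvecl _ unit_key).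
by under eq_bigr do rewrite Bprod1l; apply: vec_expansion.
Qed.

Section TensorUnit.
Variables (A : lmodType R) (mulA : A -> A -> A) (oneA : A).

Lemma tmul1l (G : {ffun K -> A}) :
    (forall c x y, mulA (c *: x) y = c *: mulA x y) -> left_id oneA mulA ->
  tmul q mulA (tone N oneA) G = G.
Proof.
move=> mulAZl mul1A; apply/ffunP => j; rewrite (tmul_tensl _ mulAZl oneA unit_key).
rewrite (big_only1 j) // => [|l lj _]; first by rewrite Hprod1l bvecE eqxx scale1r mul1A.
by rewrite Hprod1l bvecE eq_sym (negbTE lj) scale0r.
Qed.

Lemma tmul1r (F : {ffun K -> A}) :
    (forall c x, mulA x (c *: oneA) = c *: mulA x oneA) -> right_id oneA mulA ->
  tmul q mulA F (tone N oneA) = F.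
Proof.
move=> mulAZr mulA1; apply/ffunP => j; rewrite (tmul_tensr _ unit_key F j mulAZr).
rewrite (big_only1 j) // => [|l lj _]; first by rewrite Hprod1r bvecE eqxx scale1r mulA1.
by rewrite Hprod1r bvecE eq_sym (negbTE lj) scale0r.
Qed.

End TensorUnit.
End Unit.

Arguments unit_key {n}.

Section Taft.
Variables (R : comNzRingType) (n : nat) (q u a : R).
Local Notation N := n.+2.
Local Notation K := (Key N).
Local Notation V := (Vec R N).
Local Notation Bm := (Bmul q u a).

Definition g_key : K := (Ordinal (isT : (1 < N)%N), ord0).
Definition x_key : K := (ord0, Ordinal (isT : (1 < N)%N)).

Lemma BprodE (k l j : K) : Bprod q u a k l j =
  q ^+ (k.2 * l.1) * (if (k.1 + l.1 < N)%N then 1 else u)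
                   * (if (k.2 + l.2 < N)%N then 1 else a)
  * ((j.1 == (k.1 + l.1) %% N :> nat) && (j.2 == (k.2 + l.2) %% N :> nat))%N%:R.
Proof. by rewrite /Bprod !ffunE; case: (_ && _). Qed.

Lemma Bmul_bvecl_coef (k : K) (y : V) (j : K) :
  Bm (bvec k) y j = \sum_l y l * Bprod q u a k l j.
Proof. by rewrite /Bmul smul_bvecl sum_ffunE; apply: eq_bigr => l _; rewrite ffunE. Qed.

Lemma Hprod_gl m : (m.+1 < N)%N ->
  Hprod q g_key (inord m, ord0) = bvec (inord m.+1, ord0).
Proof.
move=> lt_mN; have lt_m := ltnW lt_mN.
by rewrite /Hprod /= mul0n expr0 scale1r /bvec /= !inordK // add1n modn_small.
Qed.

Lemma Bprod_gl m : (m.+1 < N)%N ->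
  Bprod q u a g_key (inord m, ord0) = bvec (inord m.+1, ord0).
Proof.
move=> lt_mN; have lt_m := ltnW lt_mN.
by rewrite /Bprod /= mul0n expr0 /bvec /= !inordK // add1n lt_mN !mulr1 scale1r !modn_small.
Qed.

Lemma tpow_rho_g m : (m < N)%N ->
  tpow q Bm (oneV R N) (rho_g R N) m = tens (bvec (inord m, ord0)) (bvec (inord m, ord0)).
Proof.
elim: m => [|m IHm] lt_mN; first by rewrite /bvec /= inordK.
rewrite /tpow iterS -/(tpow _ _ _ _ m) IHm ?(ltnW lt_mN) //.
rewrite [rho_g R N]/(tens (bvec g_key) (bvec g_key)) tmul_tens.
- by rewrite /Bmul /Hmul !smul_bvec Bprod_gl ?Hprod_gl.
- exact: BmulZl.
- by move=> *; apply: BmulZr.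
Qed.

Local Notation rho_x_pow m := (tpow q Bm (oneV R N) (rho_x R N) m).

Lemma rho_x_powS m (j : K) : rho_x_pow m.+1 j =
  \sum_l Hprod q x_key l j *: rho_x_pow m l
  + \sum_l Hprod q g_key l j *: Bm (vx R N) (rho_x_pow m l).
Proof.
rewrite /tpow iterS -/(tpow _ _ _ _ m).
rewrite [rho_x R N]/(tens (bvec unit_key) (bvec x_key) + tens (bvec x_key) (bvec g_key)).
rewrite tmulDl; last exact: BmulDl.
rewrite ffunE; congr (_ + _); rewrite (tmul_tensl _ (BmulZl _ _ _)) //.
by apply: eq_bigr => l _; rewrite Bmul1l.
Qed.

Lemma Bmul_vx_eq0 (y : V) (b : K) :
  (forall i : K, (i.2.+1 %% N == b.2)%N -> y i = 0) -> Bm (vx R N) y b = 0.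
Proof.
move=> y_eq0; rewrite (Bmul_bvecl_coef x_key); apply: big1 => i _.
have [/y_eq0 ->|ib] := boolP (i.2.+1 %% N == b.2)%N; first by rewrite mul0r.
by rewrite eq_sym in ib; rewrite BprodE /= add1n (negbTE ib) andbF !mulr0.
Qed.

Lemma rho_x_pow_vx_deg m (l b : K) : (m < b.2)%N -> rho_x_pow m l b = 0.
Proof.
elim: m l b => [|m IHm] l b lt_mb.
  by rewrite !ffunE (negbTE (lt0n_neq0 lt_mb)) andbF scaler_regE mulr0.
rewrite rho_x_powS !ffunE !sum_ffunE !big1 ?addr0 // => l' _; rewrite ffunE.
- rewrite Bmul_vx_eq0 ?scaler_regE ?mulr0 // => i /eqP i_b.
  apply: IHm; apply: contraTT lt_mb; rewrite -!leqNgt => le_im.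
  by rewrite -i_b (leq_trans (leq_mod _ _)).
- by rewrite IHm ?scaler_regE ?mulr0 // ltnW.
Qed.

Lemma Hprod_xl m : (m.+1 < N)%N ->
  Hprod q x_key (ord0, inord m) = bvec (ord0, inord m.+1).
Proof.
move=> lt_mN; have lt_m := ltnW lt_mN.
by rewrite /Hprod /= !inordK // add1n lt_mN muln0 expr0 scale1r mod0n /bvec /= inordK.
Qed.

Lemma rho_x_pow_vx0 m (l : K) (b1 : 'I_N) : (m < N)%N ->
  rho_x_pow m l (b1, ord0) = ((l == (ord0, inord m)) && (b1 == ord0))%:R.
Proof.
elim: m l b1 => [|m IHm] l b1 lt_mN.
  have -> : inord 0 = ord0 :> 'I_N by apply: val_inj; rewrite /= inordK.
  rewrite /tpow /= /tone /tens -[oneV R N]/(bvec unit_key) ffunE ffunE !bvecE.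
  by rewrite xpair_eqE eqxx andbT scaler_regE -natrM mulnb.
rewrite rho_x_powS !ffunE !sum_ffunE [X in _ + X]big1 ?addr0 => [|l' _]; last first.
  rewrite ffunE Bmul_vx_eq0 ?scaler_regE ?mulr0 // => i /= /(dvdn_leq (ltn0Sn _)) le_Ni.
  by apply: rho_x_pow_vx_deg; lia.
under eq_bigr do rewrite ffunE IHm ?(ltnW lt_mN) //.
rewrite (big_only1 (ord0, inord m)) // => [|l' l'm _]; last first.
  by rewrite (negbTE l'm) scaler_regE mulr0.
by rewrite eqxx Hprod_xl // bvecE scaler_regE -natrM mulnb.
Qed.

Lemma Bmul_gpow_vx0 (k1 b1 : 'I_N) (y : V) :
    (forall i : K, i != unit_key -> i.2 = ord0 -> y i = 0) ->
  Bm (bvec (k1, ord0)) y (b1, ord0) = y unit_key * (b1 == k1)%:R.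
Proof.
move=> y_eq0; rewrite Bmul_bvecl_coef (big_only1 unit_key) // => [|i i1 _].
  by rewrite Bprod1r bvecE xpair_eqE eqxx andbT.
have [i20|i2n0] := eqVneq i.2 ord0; first by rewrite y_eq0 ?mul0r.
have i2_neq0 : (0 == i.2 :> nat) = false by rewrite eq_sym; apply: negbTE.
by rewrite BprodE /= !add0n (modn_small (ltn_ord i.2)) i2_neq0 andbF !mulr0.
Qed.

Lemma Hprod_gpow_xpow (k : K) : Hprod q (k.1, ord0) (ord0, k.2) = bvec k.
Proof. by rewrite /Hprod /= add0n ltn_ord muln0 expr0 scale1r addn0 modn_small. Qed.

Lemma rho_bas_readout (k j : K) : rho_bas q u a k j (j.1, ord0) = (k == j)%:R.
Proof.
have coef l : Bm (bvec (k.1, ord0)) (rho_x_pow k.2 l) (j.1, ord0) =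
    (l == (ord0, k.2))%:R * (j.1 == k.1)%:R.
  rewrite Bmul_gpow_vx0 ?rho_x_pow_vx0 // ?inord_val ?eqxx ?andbT // => -[i1 i2] /[swap] /= -> i1n0.
  rewrite rho_x_pow_vx0 // [i1 == _](_ : _ = false) ?andbF //.
  by apply: contraNF i1n0 => /eqP ->.
rewrite /rho_bas tpow_rho_g // inord_val (tmul_tensl _ (BmulZl _ _ _)) sum_ffunE.
under eq_bigr do rewrite ffunE scaler_regE coef.
rewrite (big_only1 (ord0, k.2)) // => [|l lk _]; last by rewrite (negbTE lk) mul0r mulr0.
rewrite eqxx mul1r Hprod_gpow_xpow bvecE -natrM mulnb eq_sym.
by case: eqP => // ->; rewrite eqxx.
Qed.

Definition readout (F : {ffun K -> V}) : V := [ffun j => F j (j.1, ord0)].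

Lemma readout_tens (b : V) (k : K) : readout (tens b (bvec k)) = b (k.1, ord0) *: bvec k.
Proof.
apply/ffunP => j; rewrite ffunE tensE !ffunZE !bvecE !scaler_regE.
by have [->|] := eqVneq j k; rewrite ?mul1r ?mulr1 ?mul0r ?mulr0.
Qed.

Lemma readoutD (F G : {ffun K -> V}) : readout (F + G) = readout F + readout G.
Proof. by apply/ffunP => j; rewrite !ffunE. Qed.

Lemma rhoK : cancel (rho q u a) readout.
Proof.
move=> b; rewrite -[RHS]vec_expansion; apply/ffunP => j; rewrite ffunE /rho !sum_ffunE.
by apply: eq_bigr => k _; rewrite !ffunZE rho_bas_readout bvecE eq_sym.
Qed.

End Taft.

Arguments g_key {n}.
Arguments x_key {n}.

Lemma malg_mulr_scale1 (M : monomType) (R : comNzRingType) (x : {malg R[M]}) (c : R) :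
  x * (c *: 1) = c *: x.
Proof.
have -> : c *: 1 = << c *g (mone : M) >> :> {malg R[M]}.
  by rewrite -mul_malgC mulr1; apply/malgP => k; rewrite mcoeffC.
rewrite malgZ_def malgM_def fgmulgU; apply: eq_bigr => k _.
by rewrite mulm1 mulrC.
Qed.

Section TensorAlgebra.
Variables (R : comNzRingType) (N : nat) (q : R).
Local Notation K := (Key N).
Local Notation V := (Vec R N).
Local Notation T := (TA R N).

Lemma ZgenZ i c (h : V) : Zgen i (c *: h) = c *: Zgen i h.
Proof. by rewrite /Zgen scaler_sumr; apply: eq_bigr => k _; rewrite ffunE scalerA. Qed.

Lemma ZgenD i (h1 h2 : V) : Zgen i (h1 + h2) = Zgen i h1 + Zgen i h2.
Proof. by rewrite /Zgen -big_split; apply: eq_bigr => k _; rewrite ffunE scalerDl. Qed.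

Lemma Zgen_bvec i (k : K) : Zgen i (bvec k) = << fmu (i, k) >> :> T.
Proof.
rewrite /Zgen (big_only1 k) // => [|k' k'k _]; first by rewrite bvecE eqxx scale1r.
by rewrite bvecE (negbTE k'k) scale0r.
Qed.

Lemma delta_malgU (w : {fmonom Letter N}) : delta q << w >> = delta_word q w.
Proof. by rewrite /delta msuppU1 big_seq_fset1 mcoeffU1 eqxx scale1r. Qed.

End TensorAlgebra.

Section Generators.
Variables (R : comNzRingType) (n : nat) (q : R).
Local Notation N := n.+2.
Local Notation K := (Key N).
Local Notation V := (Vec R N).
Local Notation T := (TA R N).

Lemma Delta_bvec (k : K) : Delta q (bvec k) = Delta_bas q k.
Proof.
rewrite /Delta (big_only1 k) // => [|k' k'k _]; first by rewrite bvecE eqxx scale1r.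
by rewrite bvecE (negbTE k'k) scale0r.
Qed.

Lemma delta_Zgen_bvec i (k : K) :
  delta q (Zgen i (bvec k)) = [ffun j => Zgen i (Delta_bas q k j)] :> {ffun K -> T}.
Proof.
rewrite Zgen_bvec delta_malgU /delta_word fmuE /= tmul1r -?Delta_bvec //.
- by move=> c x; rewrite mulr1 malg_mulr_scale1.
- exact: mulr1.
Qed.

Lemma Delta_bas_unit : Delta_bas q unit_key = tens (oneV R N) (oneV R N).
Proof.
by rewrite /Delta_bas /tpow /= tmul1l; [| exact: HmulZl | exact: Hmul1l].
Qed.

Lemma tmul_Hmul1r (F : {ffun K -> V}) : tmul q (Hmul q) F (tone N (oneV R N)) = F.
Proof. by apply: tmul1r => [c x|]; [apply: HmulZr | apply: Hmul1r]. Qed.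

Lemma Delta_bas_g : Delta_bas q g_key = Dg R N.
Proof. by rewrite /Delta_bas /tpow /= !tmul_Hmul1r. Qed.

Lemma Delta_bas_x : Delta_bas q x_key = Dx R N.
Proof.
by rewrite /Delta_bas /tpow /= tmul_Hmul1r tmul1l; [| exact: HmulZl | exact: Hmul1l].
Qed.

Lemma delta_genE : delta q (genE R N) = tens (genE R N) (oneV R N).
Proof. by rewrite (delta_Zgen_bvec 0 unit_key) Delta_bas_unit map_tens //; apply: ZgenZ. Qed.

Lemma delta_genG : delta q (genG R N) = tens (genG R N) (hg R N).
Proof. by rewrite (delta_Zgen_bvec 0 g_key) Delta_bas_g map_tens //; apply: ZgenZ. Qed.

Lemma delta_genX :
  delta q (genX R N) = tens (genE R N) (hx R N) + tens (genX R N) (hg R N).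
Proof.
rewrite (delta_Zgen_bvec 0 x_key) Delta_bas_x map_tensD //; [exact: ZgenD | exact: ZgenZ].
Qed.

End Generators.

Section ComoduleMap.
Variables (R : comNzRingType) (n : nat) (q u a : R) (f : TA R n.+2 -> Vec R n.+2).
Hypothesis f_comod : is_comodule_algebra_map q u a f.
Local Notation N := n.+2.

Lemma comodule_map_readout t : f t = readout [ffun j => f (delta q t j)].
Proof. by case: f_comod => _ _ _ _ <-; rewrite rhoK. Qed.

Lemma comodule_map_tens t (h : Vec R N) : [ffun j => f (tens t h j)] = tens (f t) h.
Proof. by case: f_comod => _ fZ _ _ _; apply: map_tens. Qed.

Lemma comodule_map_tensD t s (h h' : Vec R N) :
  [ffun j => f ((tens t h + tens s h') j)] = tens (f t) h + tens (f s) h'.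
Proof. by case: f_comod => fD fZ _ _ _; apply: map_tensD. Qed.

Lemma comodule_map_genE : f (genE R N) = f (genE R N) unit_key *: oneV R N.
Proof.
by rewrite [LHS]comodule_map_readout delta_genE comodule_map_tens (readout_tens _ unit_key).
Qed.

Lemma comodule_map_genG : f (genG R N) = f (genG R N) g_key *: vg R N.
Proof.
by rewrite [LHS]comodule_map_readout delta_genG comodule_map_tens (readout_tens _ g_key).
Qed.

Lemma comodule_map_genX :
  f (genX R N) = f (genE R N) unit_key *: vx R N + f (genX R N) g_key *: vg R N.
Proof.
rewrite [LHS]comodule_map_readout delta_genX comodule_map_tensD readoutD.
(* Abstracting the values of f keeps rewriting from comparing genE and genX by
   conversion, which is very slow. *)
generalize (f (genE R N)) (f (genX R N)) => fE fX.
by rewrite (readout_tens _ x_key) (readout_tens _ g_key).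
Qed.

End ComoduleMap.

Theorem proposition2p2 (R : comNzRingType) (N : nat) (q u a : R) :
  (2 <= N)%N ->
  root (map_poly (fun z : int => z%:~R : R) 'Phi_N) q ->
  (exists v : R, u * v = 1) ->
  forall f : TA R N -> Vec R N,
  is_comodule_algebra_map q u a f ->
  exists lam mu xi : R,
    [/\ f (genE R N) = lam *: oneV R N,
        f (genG R N) = mu *: vg R N,
        f (genX R N) = lam *: vx R N + xi *: vg R N &
        forall lam' mu' xi' : R,
          [/\ f (genE R N) = lam' *: oneV R N,
              f (genG R N) = mu' *: vg R N &
              f (genX R N) = lam' *: vx R N + xi' *: vg R N] ->
          [/\ lam' = lam, mu' = mu & xi' = xi]].
Proof.
case: N => [|[|n]] // _ _ _ f f_comod.
exists (f (genE R n.+2) unit_key), (f (genG R n.+2) g_key), (f (genX R n.+2) g_key).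
split.
- exact: comodule_map_genE f_comod.
- exact: comodule_map_genG f_comod.
- exact: comodule_map_genX f_comod.
move=> lam' mu' xi' [fE fG fX]; split.
- by rewrite fE ffunZE scaler_regE (bvecE unit_key) eqxx mulr1.
- by rewrite fG ffunZE scaler_regE (bvecE g_key) eqxx mulr1.
rewrite fX ffunE !ffunZE !scaler_regE (bvecE x_key) (bvecE g_key) eqxx.
by rewrite mulr0 mulr1 add0r.
Qed.
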